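(* Let $A\in\mathbb{R}^{n\times n}$, $B\in\mathbb{R}^{n\times r}$, $j_{\max}\ge1$, $0<\varepsilon<1$, and shifts $\alpha_1,\ldots,\alpha_{j_{\max}}\in\mathbb{C}$ with $\mathrm{Re}(\alpha_j)<0$, $A+\alpha_jI$ nonsingular, and $\|\mathcal{C}_j\|<1$ for $j=1,\ldots,j_{\max}$. Run the inexact LR-ADI iteration (with $M=I$) of the context, and suppose that for all $1\le k\le j_{\max}$ $$\|s_k\|\le\tfrac12\Big(\sqrt{\|w_{k-1}\|^2+\tfrac{2\varepsilon}{\sigma_k\gamma_k^2j_{\max}}}-\|w_{k-1}\|\Big),\qquad \sigma_k:=\|(A+\alpha_kI)^{-1}\|.$$ Then $\|\mathcal{R}^{\mathrm{true}}_{j_{\max}}\|\le\|\mathcal{R}^{\mathrm{exact}}_{j_{\max}}\|+2\varepsilon$.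
   Context: $\mathcal{C}_k:=(A+\alpha_kI)^{-1}(A-\overline{\alpha_k}I)$. Inexact LR-ADI iteration: $w_0:=B$, $\gamma_k:=\sqrt{-2\,\mathrm{Re}(\alpha_k)}$; $v_k$ arbitrary with $s_k:=w_{k-1}-(A+\alpha_kI)v_k$, $w_k:=w_{k-1}+\gamma_k^2v_k$, $Z_k:=[\gamma_1v_1,\ldots,\gamma_kv_k]$. True residual $\mathcal{R}^{\mathrm{true}}_k:=AZ_kZ_k^*+Z_kZ_k^*A^*+BB^*$. Exact LR-ADI residual (all $s_k=0$, same shifts): $\mathcal{R}^{\mathrm{exact}}_k:=w^{\mathrm{exact}}_k(w^{\mathrm{exact}}_k)^*$ with $w^{\mathrm{exact}}_k:=\mathcal{C}_k\cdots\mathcal{C}_1B$. Norms are spectral. *)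

From HB Require Import structures.
From mathcomp Require Import all_boot all_order all_algebra.
From mathcomp Require Import all_classical all_reals.
From mathcomp Require Import complex.
Set Implicit Arguments. Unset Strict Implicit. Unset Printing Implicit Defensive.
Import Order.TTheory GRing.Theory Num.Theory.
Local Open Scope ring_scope.
Local Open Scope complex_scope.

Definition cmod2 {R : realType} (z : R[i]) : R := complex.Re z ^+ 2 + complex.Im z ^+ 2.

Definition vnorm2 {R : realType} {p : nat} (x : 'cV[R[i]]_p) : R :=
  Num.sqrt (\sum_(i < p) cmod2 (x i 0)).

Definition specnorm {R : realType} {m p : nat} (M : 'M[R[i]]_(m, p)) : R :=
  sup [set vnorm2 (M *m x) | x in [set x : 'cV[R[i]]_p | vnorm2 x <= 1]]%classic.

Definition cmx {R : realType} {m p : nat} (M : 'M[R]_(m, p)) : 'M[R[i]]_(m, p) :=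
  map_mx (fun x => x%:C) M.
Definition ctr {R : realType} {m p : nat} (M : 'M[R[i]]_(m, p)) : 'M[R[i]]_(p, m) :=
  (map_mx conjc M)^T.

Definition cayley {R : realType} {n : nat} (A : 'M[R[i]]_n) (a : R[i]) : 'M[R[i]]_n :=
  invmx (A + a%:M) *m (A - (a^*)%:M).

Definition gamr {R : realType} (a : R[i]) : R := Num.sqrt (- 2 * complex.Re a).
Definition gam {R : realType} (a : R[i]) : R[i] := (gamr a)%:C.

(* inexact LR-ADI: w_0 = B, w_k = w_{k-1} + gamma_k^2 v_k  (shifts/iterates indexed from 1) *)
Fixpoint adi_w {R : realType} {n r : nat} (B : 'M[R[i]]_(n, r))
  (alpha : nat -> R[i]) (v : nat -> 'M[R[i]]_(n, r)) (k : nat) : 'M[R[i]]_(n, r) :=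
  match k with
  | 0 => B
  | k'.+1 => adi_w B alpha v k' + (gam (alpha k) ^+ 2) *: v k
  end.

Definition adi_s {R : realType} {n r : nat} (A : 'M[R[i]]_n) (B : 'M[R[i]]_(n, r))
  (alpha : nat -> R[i]) (v : nat -> 'M[R[i]]_(n, r)) (k : nat) : 'M[R[i]]_(n, r) :=
  adi_w B alpha v k.-1 - (A + (alpha k)%:M) *m v k.

Definition adi_Z {R : realType} {n r : nat} (alpha : nat -> R[i])
  (v : nat -> 'M[R[i]]_(n, r)) (k : nat) : 'M[R[i]]_(n, \sum_(j < k) r) :=
  \mxrow_(j < k) (gam (alpha j.+1) *: v j.+1).

Definition res_true {R : realType} {n r : nat} (A : 'M[R[i]]_n) (B : 'M[R[i]]_(n, r))
  (alpha : nat -> R[i]) (v : nat -> 'M[R[i]]_(n, r)) (k : nat) : 'M[R[i]]_n :=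
  let Z := adi_Z alpha v k in
  A *m (Z *m ctr Z) + (Z *m ctr Z) *m ctr A + B *m ctr B.

Fixpoint w_exact {R : realType} {n r : nat} (A : 'M[R[i]]_n) (B : 'M[R[i]]_(n, r))
  (alpha : nat -> R[i]) (k : nat) : 'M[R[i]]_(n, r) :=
  match k with
  | 0 => B
  | k'.+1 => cayley A (alpha k) *m w_exact A B alpha k'
  end.

Definition res_exact {R : realType} {n r : nat} (A : 'M[R[i]]_n) (B : 'M[R[i]]_(n, r))
  (alpha : nat -> R[i]) (k : nat) : 'M[R[i]]_n :=
  w_exact A B alpha k *m ctr (w_exact A B alpha k).

(* Let X_k := w_k w_k^* - w^ex_k (w^ex_k)^*.  Telescoping the one-step identity
   A (G v v^* ) + (G v v^* ) A^* = w' w'^* - w w^* - G (s v^* + v s^* ) shows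
   R^true_k = w_k w_k^* - sum_j gamma_j^2 (s_j v_j^* + v_j s_j^* ).  Moreover
   w_k = C_k w_{k-1} - f_k with f_k := gamma_k^2 (A + alpha_k I)^-1 s_k, whereas
   w^ex_k = C_k w^ex_{k-1}; as ||C_k|| <= 1, each step increases ||X|| by at most
   2 ||w_{k-1}|| ||f_k|| + ||f_k||^2, and ||f_k|| <= gamma_k^2 sigma_k ||s_k|| with
   gamma_k^2 sigma_k = ||C_k - I|| <= 2.  The bound on ||s_k|| implies
   2 gamma_k^2 sigma_k ||s_k|| (||w_{k-1}|| + ||s_k||) <= eps / j_max, which caps both
   the growth of ||X|| and each correction term by eps / j_max; hence
   ||R^true|| <= ||R^exact|| + ||X|| + eps <= ||R^exact|| + 2 eps. *)

From HB Require Import structures.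
From mathcomp Require Import all_boot all_order all_algebra.
From mathcomp Require Import all_classical all_reals.
From mathcomp Require Import complex.
From mathcomp Require Import ring lra.
Set Implicit Arguments. Unset Strict Implicit. Unset Printing Implicit Defensive.
Import Order.TTheory GRing.Theory Num.Theory.
Local Open Scope ring_scope.
Local Open Scope complex_scope.

Section EuclideanNorm.
Variable R : realType.
Implicit Types (t : R) (c d : R[i]).

Lemma Re_add c d : complex.Re (c + d) = complex.Re c + complex.Re d.
Proof. by case: c; case: d. Qed.

Lemma Re_realM t c : complex.Re (t%:C * c) = t * complex.Re c.
Proof. by case: c => a b /=; ring. Qed.

Lemma Re_conj c : complex.Re c^* = complex.Re c.
Proof. by case: c. Qed.

Lemma Re_conjM c : complex.Re (c^* * c) = cmod2 c.
Proof. by case: c => a b; rewrite /cmod2 /=; ring. Qed.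

Lemma cmod2M c d : cmod2 (c * d) = cmod2 c * cmod2 d.
Proof. by case: c => a b; case: d => x y; rewrite /cmod2 /=; ring. Qed.

Lemma cmod2_real t : cmod2 t%:C = t ^+ 2.
Proof. by rewrite /cmod2 /= expr0n addr0. Qed.

Lemma cmod2_ge0 c : 0 <= cmod2 c.
Proof. by rewrite addr_ge0 ?sqr_ge0. Qed.

Lemma cmod2_eq0 c : cmod2 c = 0 -> c = 0.
Proof.
case: c => a b /eqP; rewrite /cmod2 paddr_eq0 ?sqr_ge0 // !sqrf_eq0 /=.
by case/andP=> /eqP -> /eqP ->.
Qed.

Section ConjugateTranspose.
Variables m p q : nat.
Implicit Types (M N : 'M[R[i]]_(m, p)).

Lemma ctrD M N : ctr (M + N) = ctr M + ctr N.
Proof. by rewrite /ctr map_mxD linearD. Qed.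

Lemma ctrN M : ctr (- M) = - ctr M.
Proof. by rewrite /ctr map_mxN linearN. Qed.

Lemma ctrB M N : ctr (M - N) = ctr M - ctr N.
Proof. by rewrite ctrD ctrN. Qed.

Lemma ctrZ c M : ctr (c *: M) = c^* *: ctr M.
Proof. by rewrite /ctr map_mxZ linearZ. Qed.

Lemma ctrM M (N : 'M[R[i]]_(p, q)) : ctr (M *m N) = ctr N *m ctr M.
Proof. by rewrite /ctr map_mxM trmx_mul. Qed.

Lemma ctrE M i j : ctr M i j = (M j i)^*.
Proof. by rewrite !mxE. Qed.

Lemma ctrK M : ctr (ctr M) = M.
Proof. by apply/matrixP => i j; rewrite !mxE conjcK. Qed.

End ConjugateTranspose.

Lemma ctr_scalar n c : ctr (c%:M : 'M[R[i]]_n) = c^*%:M.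
Proof. by rewrite /ctr map_scalar_mx tr_scalar_mx. Qed.

Lemma ctr_mxrow m k (p_ : 'I_k -> nat) (B_ : forall j, 'M[R[i]]_(m, p_ j)) :
  ctr (\mxrow_j B_ j) = \mxcol_j ctr (B_ j).
Proof. by apply/matrixP => i j; rewrite !mxE. Qed.

(* The real part of the Hermitian product: the Euclidean inner product of C^p
   viewed as R^(2p). *)
Definition rdot {p} (x y : 'cV[R[i]]_p) : R := complex.Re ((ctr x *m y) 0 0).

Section InnerProduct.
Variable p : nat.
Implicit Types (x y z : 'cV[R[i]]_p).

Lemma rdotC x y : rdot x y = rdot y x.
Proof. by rewrite /rdot -[x in RHS]ctrK -ctrM ctrE Re_conj. Qed.

Lemma rdotDr x y z : rdot x (y + z) = rdot x y + rdot x z.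
Proof. by rewrite /rdot mulmxDr mxE Re_add. Qed.

Lemma rdotZr t x y : rdot x (t%:C *: y) = t * rdot x y.
Proof. by rewrite /rdot -scalemxAr mxE Re_realM. Qed.

Lemma rdotNr x y : rdot x (- y) = - rdot x y.
Proof. by rewrite -scaleN1r -(rmorphN1 (real_complex R)) rdotZr mulN1r. Qed.

Lemma rdotDl x y z : rdot (x + y) z = rdot x z + rdot y z.
Proof. by rewrite rdotC rdotDr !(rdotC z). Qed.

Lemma rdotZl t x y : rdot (t%:C *: x) y = t * rdot x y.
Proof. by rewrite rdotC rdotZr rdotC. Qed.

Lemma rdotNl x y : rdot (- x) y = - rdot x y.
Proof. by rewrite rdotC rdotNr rdotC. Qed.

Lemma rdot_mulmx m (M : 'M[R[i]]_(m, p)) (u : 'cV[R[i]]_m) x :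
  rdot u (M *m x) = rdot (ctr M *m u) x.
Proof. by rewrite /rdot ctrM ctrK mulmxA. Qed.

Lemma rdotxx x : rdot x x = \sum_i cmod2 (x i 0).
Proof.
rewrite /rdot mxE (big_morph _ (@Re_add) (erefl : complex.Re 0 = 0)).
by apply: eq_bigr => i _; rewrite ctrE Re_conjM.
Qed.

Lemma vnorm2E x : vnorm2 x = Num.sqrt (rdot x x).
Proof. by rewrite rdotxx. Qed.

Lemma rdotxx_ge0 x : 0 <= rdot x x.
Proof. by rewrite rdotxx sumr_ge0 // => i _; apply: cmod2_ge0. Qed.

Lemma vnorm2_ge0 x : 0 <= vnorm2 x.
Proof. exact: sqrtr_ge0. Qed.

Lemma vnorm2_sqr x : vnorm2 x ^+ 2 = rdot x x.
Proof. by rewrite vnorm2E sqr_sqrtr ?rdotxx_ge0. Qed.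

Lemma vnorm2_entry x i : Num.sqrt (cmod2 (x i 0)) <= vnorm2 x.
Proof.
rewrite ler_sqrt; last by rewrite sumr_ge0 // => j _; apply: cmod2_ge0.
by rewrite (bigD1 i) //= lerDl sumr_ge0 // => j _; apply: cmod2_ge0.
Qed.

Lemma vnorm2_eq0 x : vnorm2 x = 0 -> x = 0.
Proof.
move=> x0; apply/matrixP => i j; rewrite (ord1 j) mxE; apply: cmod2_eq0.
apply/eqP; rewrite eq_le cmod2_ge0 andbT -sqrtr_eq0 eq_le sqrtr_ge0 andbT -x0.
exact: vnorm2_entry.
Qed.

Lemma vnorm20 : vnorm2 (0 : 'cV[R[i]]_p) = 0.
Proof. by rewrite /vnorm2 big1 ?sqrtr0 // => i _; rewrite mxE /cmod2 /= expr0n addr0. Qed.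

Lemma rdot_le_vnorm2 x y : rdot x y <= vnorm2 x * vnorm2 y.
Proof.
set a := vnorm2 x; set b := vnorm2 y.
have [a0|a_neq0] := eqVneq a 0.
  by rewrite a0 mul0r (vnorm2_eq0 a0) rdotC /rdot mulmx0 mxE.
have [b0|b_neq0] := eqVneq b 0.
  by rewrite b0 mulr0 (vnorm2_eq0 b0) /rdot mulmx0 mxE.
have ab_gt0 : 0 < a * b by rewrite mulr_gt0 // lt0r ?a_neq0 ?b_neq0 ?vnorm2_ge0.
(* 0 <= |b x - a y|^2 = 2 a b (a b - rdot x y) *)
have := rdotxx_ge0 (b%:C *: x - a%:C *: y).
rewrite !(rdotDl, rdotDr, rdotNl, rdotNr, rdotZl, rdotZr) -!vnorm2_sqr -/a -/b (rdotC y x).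
by move=> expand; rewrite -(ler_pM2l ab_gt0); lra.
Qed.

Lemma vnorm2D x y : vnorm2 (x + y) <= vnorm2 x + vnorm2 y.
Proof.
rewrite -(ler_pXn2r (_ : (0 < 2)%N)) ?nnegrE ?addr_ge0 ?vnorm2_ge0 //.
rewrite vnorm2_sqr rdotDl !rdotDr (rdotC y x) sqrrD -!vnorm2_sqr.
by have := rdot_le_vnorm2 x y; lra.
Qed.

Lemma vnorm2Z c x : vnorm2 (c *: x) = Num.sqrt (cmod2 c) * vnorm2 x.
Proof.
rewrite /vnorm2 -sqrtrM ?cmod2_ge0 // mulr_sumr.
by congr Num.sqrt; apply: eq_bigr => i _; rewrite mxE cmod2M.
Qed.

Lemma vnorm2Zr t x : vnorm2 (t%:C *: x) = `|t| * vnorm2 x.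
Proof. by rewrite vnorm2Z cmod2_real sqrtr_sqr. Qed.

Lemma vnorm2_sum (I : finType) (f : I -> 'cV[R[i]]_p) :
  vnorm2 (\sum_i f i) <= \sum_i vnorm2 (f i).
Proof.
elim/big_ind2: _ => [|u a u' a' ua u'a'|//]; first by rewrite vnorm20.
by apply: le_trans (vnorm2D _ _) _; apply: lerD.
Qed.

End InnerProduct.

Section SpectralNorm.
Variables m p : nat.
Implicit Types (M N : 'M[R[i]]_(m, p)) (x : 'cV[R[i]]_p).

Lemma vnorm2_mulmx_le_sum_col M x :
  vnorm2 (M *m x) <= (\sum_j vnorm2 (col j M)) * vnorm2 x.
Proof.
have -> : M *m x = \sum_j x j 0 *: col j M.
  apply/matrixP => i k; rewrite (ord1 k) !mxE summxE.
  by apply: eq_bigr => j _; rewrite !mxE mulrC.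
apply: le_trans (vnorm2_sum _) _; rewrite mulr_suml; apply: ler_sum => j _.
by rewrite vnorm2Z mulrC ler_wpM2l ?vnorm2_ge0 ?vnorm2_entry.
Qed.

Let ball_image M := [set vnorm2 (M *m x) | x in [set x | vnorm2 x <= 1]]%classic.

Lemma ball_image_ubound M : has_ubound (ball_image M).
Proof.
exists (\sum_j vnorm2 (col j M)) => _ [x /= x_le1 <-].
apply: le_trans (vnorm2_mulmx_le_sum_col M x) _.
by rewrite ler_piMr ?sumr_ge0 // => j _; apply: vnorm2_ge0.
Qed.

Lemma specnorm_ge0 M : 0 <= specnorm M.
Proof.
apply: (ub_le_sup (ball_image_ubound M)); exists 0; last by rewrite mulmx0 vnorm20.
by rewrite /= vnorm20.
Qed.

Lemma specnorm_ub M x : vnorm2 (M *m x) <= specnorm M * vnorm2 x.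
Proof.
have [x0|x_neq0] := eqVneq (vnorm2 x) 0.
  by rewrite (vnorm2_eq0 x0) mulmx0 !vnorm20 mulr0.
have x_gt0 : 0 < vnorm2 x by rewrite lt0r x_neq0 vnorm2_ge0.
set y := (vnorm2 x)^-1%:C *: x.
have y_in : ball_image M (vnorm2 (M *m y)).
  by exists y; rewrite //= vnorm2Zr ger0_norm ?invr_ge0 ?vnorm2_ge0 // mulVf.
have := ub_le_sup (ball_image_ubound M) y_in.
rewrite /y -scalemxAr vnorm2Zr ger0_norm ?invr_ge0 ?vnorm2_ge0 //.
by rewrite -(ler_pM2l x_gt0) mulrA mulfV ?mul1r // (mulrC (vnorm2 x)).
Qed.

Lemma specnorm_le M K :
  0 <= K -> (forall x, vnorm2 (M *m x) <= K * vnorm2 x) -> specnorm M <= K.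
Proof.
move=> K_ge0 HK; apply: ge_sup; first by exists 0, 0; rewrite /= ?mulmx0 vnorm20.
by move=> _ [x /= x_le1 <-]; apply: le_trans (HK x) _; rewrite ler_piMr.
Qed.

Lemma specnorm0 : specnorm (0 : 'M[R[i]]_(m, p)) = 0.
Proof.
apply/eqP; rewrite eq_le specnorm_ge0 andbT.
by apply: specnorm_le => // x; rewrite mul0mx vnorm20 mul0r.
Qed.

Lemma specnormD M N : specnorm (M + N) <= specnorm M + specnorm N.
Proof.
apply: specnorm_le => [|x]; first by rewrite addr_ge0 ?specnorm_ge0.
by rewrite mulmxDl mulrDl; apply: le_trans (vnorm2D _ _) _; rewrite lerD ?specnorm_ub.
Qed.

Lemma specnormZr t M : specnorm (t%:C *: M) = `|t| * specnorm M.
Proof.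
have le_scale u N : specnorm (u%:C *: N) <= `|u| * specnorm N.
  apply: specnorm_le => [|x]; first by rewrite mulr_ge0 ?specnorm_ge0.
  by rewrite -scalemxAl vnorm2Zr -mulrA ler_wpM2l ?specnorm_ub.
apply/eqP; rewrite eq_le le_scale /=.
have [->|t_neq0] := eqVneq t 0; first by rewrite normr0 mul0r specnorm_ge0.
have ti_gt0 : 0 < `|t|^-1 by rewrite invr_gt0 normr_gt0.
rewrite -(ler_pM2l ti_gt0) mulrA mulVf ?mul1r ?normr_eq0 // -normfV.
by rewrite -{1}(scale1r M) -(rmorph1 (real_complex R)) -(mulVf t_neq0) rmorphM -scalerA le_scale.
Qed.

Lemma specnormN M : specnorm (- M) = specnorm M.
Proof. by rewrite -scaleN1r -(rmorphN1 (real_complex R)) specnormZr normrN1 mul1r. Qed.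

Lemma specnormB M N : specnorm (M - N) <= specnorm M + specnorm N.
Proof. by rewrite -(specnormN N) specnormD. Qed.

Lemma specnorm_sum (I : finType) (F : I -> 'M[R[i]]_(m, p)) :
  specnorm (\sum_i F i) <= \sum_i specnorm (F i).
Proof.
elim/big_ind2: _ => [|M a N b Ma Nb|//]; first by rewrite specnorm0.
by apply: le_trans (specnormD _ _) _; apply: lerD.
Qed.

End SpectralNorm.

Lemma specnormM m p q (M : 'M[R[i]]_(m, p)) (N : 'M[R[i]]_(p, q)) :
  specnorm (M *m N) <= specnorm M * specnorm N.
Proof.
apply: specnorm_le => [|x]; first by rewrite mulr_ge0 ?specnorm_ge0.
rewrite -mulmxA -mulrA; apply: le_trans (specnorm_ub _ _) _.
by rewrite ler_wpM2l ?specnorm_ge0 ?specnorm_ub.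
Qed.

Lemma specnorm_ctr m p (M : 'M[R[i]]_(m, p)) : specnorm (ctr M) <= specnorm M.
Proof.
apply: specnorm_le => [|y]; first exact: specnorm_ge0.
set z := ctr M *m y.
have [z0|z_neq0] := eqVneq (vnorm2 z) 0.
  by rewrite z0 mulr_ge0 ?specnorm_ge0 ?vnorm2_ge0.
have z_gt0 : 0 < vnorm2 z by rewrite lt0r z_neq0 vnorm2_ge0.
rewrite -(ler_pM2l z_gt0) -expr2 vnorm2_sqr {1}/z -rdot_mulmx rdotC.
apply: le_trans (rdot_le_vnorm2 _ _) _.
by rewrite mulrA (mulrC (vnorm2 z)) ler_wpM2r ?vnorm2_ge0 ?specnorm_ub.
Qed.

Lemma specnorm_mulmx_ctr m p q (M : 'M[R[i]]_(m, p)) (N : 'M[R[i]]_(q, p)) :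
  specnorm (M *m ctr N) <= specnorm M * specnorm N.
Proof.
apply: le_trans (specnormM _ _) _.
by rewrite ler_wpM2l ?specnorm_ge0 ?specnorm_ctr.
Qed.

Lemma specnorm1 n : specnorm (1%:M : 'M[R[i]]_n) <= 1.
Proof. by apply: specnorm_le => // x; rewrite mul1mx mul1r. Qed.

End EuclideanNorm.

Section GramDifference.
Variables (R : realType) (n r : nat).
Implicit Types (C : 'M[R[i]]_n) (x y f : 'M[R[i]]_(n, r)).

Lemma gram_diff_mul C x y f :
  (C *m x - f) *m ctr (C *m x - f) - (C *m y) *m ctr (C *m y)
  = C *m (x *m ctr x - y *m ctr y) *m ctr C
    - (C *m x) *m ctr f - f *m ctr (C *m x) + f *m ctr f.
Proof.
rewrite !(ctrB, ctrM) !(mulmxBl, mulmxBr) !mulmxA.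
by apply/matrixP => i j; rewrite !mxE; ring.
Qed.

Lemma specnorm_gram_diff_step C x y f : specnorm C <= 1 ->
  specnorm ((C *m x - f) *m ctr (C *m x - f) - (C *m y) *m ctr (C *m y))
  <= specnorm (x *m ctr x - y *m ctr y) + 2 * specnorm x * specnorm f + specnorm f ^+ 2.
Proof.
(* Proved before the norm bounds enter the context: [lra] would reify them and crawl. *)
have sum_le (a b c d D X F : R) : a <= D -> b <= X * F -> c <= X * F -> d <= F * F ->
    a + b + c + d <= D + 2 * X * F + F ^+ 2 by lra.
move=> C_le1; rewrite gram_diff_mul.
have contract m (M : 'M[R[i]]_(n, m)) : specnorm (C *m M) <= specnorm M.
  by apply: le_trans (specnormM _ _) _; rewrite ler_piMl ?specnorm_ge0.
have CXC : specnorm (C *m (x *m ctr x - y *m ctr y) *m ctr C) <= specnorm (x *m ctr x - y *m ctr y).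
  apply: le_trans (specnormM _ _) _; rewrite -[X in _ <= X]mulr1.
  exact: ler_pM (specnorm_ge0 _) (specnorm_ge0 _) (contract _ _) (le_trans (specnorm_ctr C) C_le1).
have Cx_f : specnorm (C *m x *m ctr f) <= specnorm x * specnorm f.
  by apply: le_trans (specnorm_mulmx_ctr _ _) _; rewrite ler_wpM2r ?specnorm_ge0 ?contract.
have f_Cx : specnorm (f *m ctr (C *m x)) <= specnorm x * specnorm f.
  rewrite mulrC; apply: le_trans (specnorm_mulmx_ctr _ _) _.
  by rewrite ler_wpM2l ?specnorm_ge0 ?contract.
apply: le_trans (specnormD _ _) _; apply: le_trans (lerD (specnormB _ _) (le_refl _)) _.
apply: le_trans (lerD (lerD (specnormB _ _) (le_refl _)) (le_refl _)) _.
exact: sum_le CXC Cx_f f_Cx (specnorm_mulmx_ctr f f).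
Qed.

End GramDifference.

Section ShiftedSystem.
Variables (R : realType) (n : nat) (A : 'M[R[i]]_n).
Implicit Type a : R[i].

Lemma gam_sqr_real a : gam a ^+ 2 = (gamr a ^+ 2)%:C.
Proof. by rewrite /gam rmorphXn. Qed.

Lemma conj_gam a : Num.conj (gam a) = gam a.
Proof. exact: conjc_real. Qed.

Lemma gam_sqr a : complex.Re a <= 0 -> gam a ^+ 2 = - (a + a^*).
Proof.
case: a => x y /= Rex; rewrite gam_sqr_real /gamr sqr_sqrtr /=; last by lra.
by apply/eqP; rewrite eq_complex /=; apply/andP; split; apply/eqP; ring.
Qed.

Lemma cayleyE a : A + a%:M \in unitmx -> complex.Re a <= 0 ->
  cayley A a = 1%:M + gam a ^+ 2 *: invmx (A + a%:M).
Proof.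
move=> Aa_unit Rea; rewrite gam_sqr // /cayley.
have -> : A - a^*%:M = (A + a%:M) - (a + a^*)%:M by rewrite raddfD /= opprD addrA addrK.
by rewrite mulmxBr mulVmx // mul_mx_scalar scaleNr.
Qed.

Lemma gamr_sqr_specnorm_invmx_le2 a : A + a%:M \in unitmx -> complex.Re a <= 0 ->
  specnorm (cayley A a) <= 1 -> gamr a ^+ 2 * specnorm (invmx (A + a%:M)) <= 2.
Proof.
move=> Aa_unit Rea C_le1.
rewrite -[gamr a ^+ 2]ger0_norm ?sqr_ge0 // -specnormZr -gam_sqr_real.
have -> : gam a ^+ 2 *: invmx (A + a%:M) = cayley A a - 1%:M.
  by rewrite cayleyE // addrAC subrr add0r.
by apply: le_trans (specnormB _ _) _; apply: lerD C_le1 (specnorm1 _ _).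
Qed.

Lemma lyap_rank_one_update r (w v : 'M[R[i]]_(n, r)) a :
  let G := - (a + a^*) in let s := w - (A + a%:M) *m v in
  A *m (G *: (v *m ctr v)) + (G *: (v *m ctr v)) *m ctr A
  = (w + G *: v) *m ctr (w + G *: v) - w *m ctr w - G *: (s *m ctr v + v *m ctr s).
Proof.
move=> G s; have G_real : Num.conj G = G by rewrite /G rmorphN rmorphD /= conjCK addrC.
rewrite /s !(ctrD, ctrB, ctrN, ctrM, ctrZ, ctr_scalar) G_real.
rewrite !(mulmxDl, mulmxDr, mulmxBl, mulmxBr, mulNmx, mulmxN) ?mul_scalar_mx ?mul_mx_scalar.
rewrite -!scalemxAl -!scalemxAr !mulmxA.
move: (A *m v *m ctr v) (v *m ctr v *m ctr A) => Avv vvA.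
move: (w *m ctr w) (w *m ctr v) (v *m ctr w) (v *m ctr v) => ww wv vw vv.
by apply/matrixP => i j; rewrite !mxE /G; ring.
Qed.

End ShiftedSystem.

Section LowRankADI.
Variables (R : realType) (n r : nat) (A : 'M[R[i]]_n) (B : 'M[R[i]]_(n, r)).
Variables (alpha : nat -> R[i]) (v : nat -> 'M[R[i]]_(n, r)).
Local Notation w := (adi_w B alpha v).
Local Notation s := (adi_s A B alpha v).
Local Notation G k := (gam (alpha k) ^+ 2).

Lemma adi_Z_gram k :
  adi_Z alpha v k *m ctr (adi_Z alpha v k) = \sum_(j < k) G j.+1 *: (v j.+1 *m ctr (v j.+1)).
Proof.
rewrite /adi_Z ctr_mxrow mul_mxrow_mxcol; apply: eq_bigr => j _.
by rewrite ctrZ conj_gam -scalemxAl -scalemxAr scalerA.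
Qed.

Lemma res_trueE k : (forall j, (0 < j <= k)%N -> complex.Re (alpha j) <= 0) ->
  res_true A B alpha v k
  = w k *m ctr (w k) - \sum_(j < k) G j.+1 *: (s j.+1 *m ctr (v j.+1) + v j.+1 *m ctr (s j.+1)).
Proof.
move=> Re_le0; rewrite /res_true adi_Z_gram mulmx_sumr mulmx_suml -big_split /=.
have step (j : 'I_k) :
    A *m (G j.+1 *: (v j.+1 *m ctr (v j.+1))) + G j.+1 *: (v j.+1 *m ctr (v j.+1)) *m ctr A
    = w j.+1 *m ctr (w j.+1) - w j *m ctr (w j)
      - G j.+1 *: (s j.+1 *m ctr (v j.+1) + v j.+1 *m ctr (s j.+1)).
  rewrite [w j.+1]/= /adi_s /= gam_sqr; first exact: lyap_rank_one_update.
  by apply: Re_le0; rewrite /= ltn_ord.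
rewrite (eq_bigr _ (fun j _ => step j)) sumrB.
rewrite -(big_mkord xpredT (fun j => w j.+1 *m ctr (w j.+1) - w j *m ctr (w j))).
by rewrite telescope_sumr // addrAC subrK.
Qed.

Lemma adi_vE k : A + (alpha k.+1)%:M \in unitmx ->
  v k.+1 = invmx (A + (alpha k.+1)%:M) *m (w k - s k.+1).
Proof. by move=> unit_k; rewrite /adi_s /= opprB addrCA subrr addr0 mulKmx. Qed.

Lemma adi_w_step k : A + (alpha k.+1)%:M \in unitmx -> complex.Re (alpha k.+1) <= 0 ->
  w k.+1 = cayley A (alpha k.+1) *m w k - G k.+1 *: (invmx (A + (alpha k.+1)%:M) *m s k.+1).
Proof.
move=> unit_k Re_le0; rewrite cayleyE // /= {1}(adi_vE unit_k) mulmxDl mul1mx.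
by rewrite -scalemxAl -addrA -scalerBr -mulmxBr.
Qed.

End LowRankADI.

Lemma half_sqrt_gap_budget (R : rcfType) (W d u e : R) :
  0 <= W -> 0 <= d -> 0 <= u -> 0 <= e ->
  d <= 2^-1 * (Num.sqrt (W ^+ 2 + 2 * e / u) - W) -> 2 * u * d * (W + d) <= e.
Proof.
move=> W_ge0 d_ge0 u_ge0 e_ge0 d_le.
have q_ge0 : 0 <= 2 * e / u by rewrite divr_ge0 ?mulr_ge0.
have le_sqrt : 2 * d + W <= Num.sqrt (W ^+ 2 + 2 * e / u) by lra.
have le_sq : (2 * d + W) ^+ 2 <= W ^+ 2 + 2 * e / u.
  rewrite -[X in _ <= X]sqr_sqrtr ?addr_ge0 ?sqr_ge0 //.
  by rewrite ler_pXn2r ?nnegrE ?sqrtr_ge0 ?addr_ge0 ?mulr_ge0.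
have [->|u_neq0] := eqVneq u 0; first by rewrite mulr0 !mul0r.
have : u * ((2 * d + W) ^+ 2 - W ^+ 2) <= u * (2 * e / u).
  by apply: ler_wpM2l => //; rewrite lerBlDr [X in _ <= X]addrC.
by rewrite mulrCA divff // mulr1; nra.
Qed.

Section ErrorBound.
Variables (R : realType) (n r jmax : nat) (A : 'M[R[i]]_n) (B : 'M[R[i]]_(n, r)).
Variables (alpha : nat -> R[i]) (v : nat -> 'M[R[i]]_(n, r)) (eps : R).
Local Notation w := (adi_w B alpha v).
Local Notation s := (adi_s A B alpha v).
Local Notation w_ex := (w_exact A B alpha).
Local Notation F k := (invmx (A + (alpha k)%:M)).
Local Notation G k := (gam (alpha k) ^+ 2).
Local Notation g k := (gamr (alpha k) ^+ 2).
Local Notation defect k := (G k *: (F k *m s k)).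

Hypothesis jmax_gt0 : (0 < jmax)%N.
Hypothesis eps_ge0 : 0 <= eps.
Hypothesis shifts_ok : forall j, (1 <= j <= jmax)%N ->
  [/\ complex.Re (alpha j) < 0, A + (alpha j)%:M \in unitmx & specnorm (cayley A (alpha j)) < 1].
Hypothesis s_small : forall k, (1 <= k <= jmax)%N ->
  specnorm (s k) <= 2^-1 * (Num.sqrt (specnorm (w k.-1) ^+ 2
    + 2 * eps / (specnorm (F k) * g k * jmax%:R)) - specnorm (w k.-1)).

Let c := eps / jmax%:R.

Lemma step_budget k : (k < jmax)%N ->
  2 * (g k.+1 * specnorm (F k.+1)) * specnorm (s k.+1) * (specnorm (w k) + specnorm (s k.+1)) <= c.
Proof.
move=> lt_k.
apply: half_sqrt_gap_budget (specnorm_ge0 _) (specnorm_ge0 _) _ (divr_ge0 eps_ge0 (ler0n _ _)) _.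
  exact: mulr_ge0 (sqr_ge0 _) (specnorm_ge0 _).
by rewrite /c mulrA -mulrA -invfM [jmax%:R * _]mulrC [g _ * _]mulrC; apply: s_small.
Qed.

Lemma correction_term_le k : (k < jmax)%N ->
  specnorm (G k.+1 *: (s k.+1 *m ctr (v k.+1) + v k.+1 *m ctr (s k.+1))) <= c.
Proof.
have cross_budget (x y d V W : R) :
    0 <= x * d -> V <= y * (W + d) -> x * (2 * d * V) <= 2 * (x * y) * d * (W + d).
  by move=> xd_ge0 V_le; nra.
move=> lt_k; have [_ unit_k _] := @shifts_ok k.+1 lt_k.
rewrite gam_sqr_real specnormZr ger0_norm ?sqr_ge0 //.
have v_le : specnorm (v k.+1) <= specnorm (F k.+1) * (specnorm (w k) + specnorm (s k.+1)).
  rewrite (adi_vE B v unit_k); apply: le_trans (specnormM _ _) _.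
  by apply: ler_wpM2l; [exact: specnorm_ge0 | exact: specnormB].
have sv_le : specnorm (s k.+1 *m ctr (v k.+1) + v k.+1 *m ctr (s k.+1))
    <= 2 * specnorm (s k.+1) * specnorm (v k.+1).
  apply: le_trans (specnormD _ _) _; rewrite mulr_natl mulr2n mulrDl.
  apply: lerD; first exact: specnorm_mulmx_ctr.
  by rewrite mulrC; exact: specnorm_mulmx_ctr.
apply: le_trans (step_budget lt_k).
apply: le_trans (ler_wpM2l (sqr_ge0 _) sv_le) _.
exact: cross_budget (mulr_ge0 (sqr_ge0 _) (specnorm_ge0 _)) v_le.
Qed.

Lemma defect_growth_le k : (k < jmax)%N ->
  2 * specnorm (w k) * specnorm (defect k.+1) + specnorm (defect k.+1) ^+ 2 <= c.
Proof.
have defect_budget (u d W x : R) : 0 <= x -> x <= u * d -> u * d <= 2 * d -> 0 <= W ->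
    2 * W * x + x ^+ 2 <= 2 * u * d * (W + d).
  by move=> *; nra.
move=> lt_k; have [Re_lt0 unit_k C_lt1] := @shifts_ok k.+1 lt_k.
have u_le2 := gamr_sqr_specnorm_invmx_le2 unit_k (ltW Re_lt0) (ltW C_lt1).
have defect_le : specnorm (defect k.+1) <= g k.+1 * specnorm (F k.+1) * specnorm (s k.+1).
  rewrite gam_sqr_real specnormZr ger0_norm; last exact: sqr_ge0.
  by rewrite -(mulrA (g k.+1)); apply: ler_wpM2l; [exact: sqr_ge0 | exact: specnormM].
apply: le_trans (step_budget lt_k).
apply: defect_budget (specnorm_ge0 _) defect_le _ (specnorm_ge0 _).
by apply: ler_wpM2r u_le2; exact: specnorm_ge0.
Qed.

Lemma gram_diff_le k : (k <= jmax)%N ->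
  specnorm (w k *m ctr (w k) - w_ex k *m ctr (w_ex k)) <= k%:R * c.
Proof.
elim: k => [_|k IH lt_k]; first by rewrite /= subrr specnorm0 mul0r.
have [Re_lt0 unit_k C_lt1] := @shifts_ok k.+1 lt_k.
rewrite (adi_w_step B v unit_k (ltW Re_lt0)) [w_ex k.+1]/=.
apply: le_trans (specnorm_gram_diff_step _ _ _ (ltW C_lt1)) _.
rewrite -[k.+1%:R]natr1 (mulrDl _ 1 c) mul1r -addrA.
exact: lerD (IH (ltnW lt_k)) (defect_growth_le lt_k).
Qed.

Lemma res_true_le :
  specnorm (res_true A B alpha v jmax) <= specnorm (res_exact A B alpha jmax) + 2 * eps.
Proof.
rewrite res_trueE; last by move=> j /shifts_ok [/ltW].
have jmax_c : jmax%:R * c = eps by rewrite /c mulrC divfK // pnatr_eq0 -lt0n.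
have gram_le : specnorm (w jmax *m ctr (w jmax)) <= specnorm (res_exact A B alpha jmax) + eps.
  rewrite /res_exact -[w jmax *m _](subrK (w_ex jmax *m ctr (w_ex jmax))).
  apply: le_trans (specnormD _ _) _; rewrite [leLHS]addrC lerD2l -jmax_c.
  exact: gram_diff_le.
have corr_le : specnorm (\sum_(j < jmax)
    G j.+1 *: (s j.+1 *m ctr (v j.+1) + v j.+1 *m ctr (s j.+1))) <= eps.
  apply: le_trans (specnorm_sum _) _.
  apply: le_trans (ler_sum _ (fun j _ => correction_term_le (ltn_ord j))) _.
  by rewrite sumr_const card_ord -mulr_natl jmax_c.
apply: le_trans (specnormB _ _) _.
have -> : 2 * eps = eps + eps by rewrite mulr_natl mulr2n.
by rewrite [leRHS]addrA; exact: lerD gram_le corr_le.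
Qed.

End ErrorBound.

Theorem corollary3p8 (R : realType) (n r jmax : nat)
  (A : 'M[R]_n) (B : 'M[R]_(n, r)) (eps : R)
  (alpha : nat -> R[i]) (v : nat -> 'M[R[i]]_(n, r)) :
  (1 <= jmax)%N -> 0 < eps -> eps < 1 ->
  (forall j, (1 <= j <= jmax)%N ->
     [/\ complex.Re (alpha j) < 0,
         cmx A + (alpha j)%:M \in unitmx
       & specnorm (cayley (cmx A) (alpha j)) < 1]) ->
  (forall k, (1 <= k <= jmax)%N ->
     let wn := specnorm (adi_w (cmx B) alpha v k.-1) in
     let sigma := specnorm (invmx (cmx A + (alpha k)%:M)) in
     specnorm (adi_s (cmx A) (cmx B) alpha v k)
       <= 2^-1 * (Num.sqrt (wn ^+ 2 + 2 * eps / (sigma * gamr (alpha k) ^+ 2 * jmax%:R))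
                  - wn)) ->
  specnorm (res_true (cmx A) (cmx B) alpha v jmax)
    <= specnorm (res_exact (cmx A) (cmx B) alpha jmax) + 2 * eps.
Proof.
move=> jmax_gt0 eps_gt0 _ shifts_ok s_small.
exact: res_true_le jmax_gt0 (ltW eps_gt0) shifts_ok s_small.
Qed.
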